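(* Let $p\in\mathcal P_9$ be extremal, of the form $p(z)=(z-a)\prod_{k=1}^{8}(z-z_k)$ with $|z_k|\le 1$, $a$ real with $0<a<1$, and $I(a)=I(p)$. Let $\zeta_1,\dots,\zeta_8$ be the zeros of $p'$, $r_k=|a-z_k|$, $\rho_j=|a-\zeta_j|$, and $R_k=r_k\prod_{j=1}^{8}r_j^{-1/8}$. If $\min_j\rho_j>1$, then $$\sum_{k=1}^{8}\frac1{R_k^2}\le U^\ast(a),$$ where, with $s=2\sin(\pi/9)$, $$U^\ast(a)=(8-v^\ast)\Big(\frac{s}{1+a}\Big)^{-7/4}+(v^\ast-1)\Big(\frac{1+a}{9^{1/8}}\Big)^{-2}+\Big\{\Big(\frac{s}{1+a}\Big)^{\frac78(8-v^\ast)}\Big(\frac{1+a}{9^{1/8}}\Big)^{v^\ast-1}\Big\}^2,$$ and $v^\ast$ is the least integer $j$ with $$j\ \ge\ 7\log\Big(\frac{1+a}{s}\Big)\Big/\log\Big(\frac{(1+a)^{15/8}}{9^{1/8}s^{7/8}}\Big).$$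
   Context: For $n\ge2$, $\mathcal P_n$ denotes the set of monic polynomials of degree $n$ all of whose zeros lie in the closed unit disk $\{|z|\le1\}$. For $p\in\mathcal P_n$ with critical points (zeros of $p'$) $\zeta_1,\dots,\zeta_{n-1}$ and for a zero $w$ of $p$, $I(w)=\min_{1\le j\le n-1}|w-\zeta_j|$; $I(p)=\max\{I(w): p(w)=0\}$; and $I(\mathcal P_n)=\sup_{p\in\mathcal P_n}I(p)$. A polynomial $p\in\mathcal P_n$ is extremal if $I(p)=I(\mathcal P_n)$. *)

From Stdlib Require Import Reals Lra List ZArith.
Import ListNotations.
Open Scope R_scope.

Definition Cx := (R * R)%type.
Definition C0 : Cx := (0, 0).
Definition C1 : Cx := (1, 0).
Definition RtoC (x : R) : Cx := (x, 0).
Definition Cadd (u v : Cx) : Cx := (fst u + fst v, snd u + snd v).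
Definition Csub (u v : Cx) : Cx := (fst u - fst v, snd u - snd v).
Definition Cmul (u v : Cx) : Cx :=
  (fst u * fst v - snd u * snd v, fst u * snd v + snd u * fst v).
Definition Cmod (u : Cx) : R := sqrt (fst u ^ 2 + snd u ^ 2).

Fixpoint peval (ws : list Cx) (z : Cx) : Cx :=
  match ws with
  | [] => C1
  | w :: ws' => Cmul (Csub z w) (peval ws' z)
  end.

Fixpoint pderiv (ws : list Cx) (z : Cx) : Cx :=
  match ws with
  | [] => C0
  | w :: ws' => Cadd (peval ws' z) (Cmul (Csub z w) (pderiv ws' z))
  end.

(* p in P_n : monic of degree n (n zeros counted with multiplicity),
   all zeros in the closed unit disk. *)
Definition inP (n : nat) (ws : list Cx) : Prop :=
  length ws = n /\ Forall (fun w => Cmod w <= 1) ws.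

Definition is_crit (ws zs : list Cx) : Prop :=
  length zs = pred (length ws) /\
  forall z, pderiv ws z = Cmul (RtoC (INR (length ws))) (peval zs z).

Fixpoint Rmin_list (l : list R) : R :=
  match l with
  | [] => 0
  | [x] => x
  | x :: l' => Rmin x (Rmin_list l')
  end.
Fixpoint Rmax_list (l : list R) : R :=
  match l with
  | [] => 0
  | [x] => x
  | x :: l' => Rmax x (Rmax_list l')
  end.

Definition Iw (w : Cx) (zs : list Cx) : R :=
  Rmin_list (map (fun zeta => Cmod (Csub w zeta)) zs).
Definition Ip (ws zs : list Cx) : R := Rmax_list (map (fun w => Iw w zs) ws).

Definition Iset (n : nat) (x : R) : Prop :=
  exists ws zs, inP n ws /\ is_crit ws zs /\ x = Ip ws zs.

Definition extremal (n : nat) (ws : list Cx) : Prop :=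
  inP n ws /\ forall zs, is_crit ws zs -> is_lub (Iset n) (Ip ws zs).

Definition s_const : R := 2 * sin (PI / 9).

Definition vstar_bound (a : R) : R :=
  7 * ln ((1 + a) / s_const) /
  ln (Rpower (1 + a) (15 / 8) / (Rpower 9 (1 / 8) * Rpower s_const (7 / 8))).

Definition Ustar (a : R) (v : Z) : R :=
  let A := s_const / (1 + a) in
  let B := (1 + a) / Rpower 9 (1 / 8) in
  (8 - IZR v) * Rpower A (- (7 / 4))
  + (IZR v - 1) * Rpower B (-2)
  + (Rpower A (7 / 8 * (8 - IZR v)) * Rpower B (IZR v - 1)) ^ 2.

From Pilot Require Import Defs.
From Stdlib Require Import Reals List ZArith Lra Lia.
Open Scope R_scope.

(* The distances r_k = |a - z_k| obey three constraints:
   - r_k <= 1 + a, since |z_k| <= 1;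
   - prod_k r_k = |p'(a)| = 9 prod_j |a - zeta_j| >= 9;
   - r_k > s = 2 sin (PI/9): by the Grace-Heawood theorem, p' has a zero
     within |a - z_k| / s of a, and all zeros of p' are at distance > 1.
   In logarithmic coordinates x_k = ln R_k these say that the x_k lie in an
   interval [xlow a, xhigh a] and sum to 0, while sum 1 / R_k^2 = sum phi x_k
   with phi x = exp (-2 x) convex; a smoothing argument then bounds the sum by
   its value at the extremal configuration, which is U*(a) (the integer v*
   counts the points not pushed to the lower end). *)

Fixpoint cpow (u : Cx) (n : nat) : Cx :=
  match n with O => Defs.C1 | S n' => Cmul u (cpow u n') end.

Lemma cpow_polar t n : cpow (cos t, sin t) n = (cos (INR n * t), sin (INR n * t)).
Proof.
induction n as [|n IH].
- simpl. rewrite Rmult_0_l, cos_0, sin_0. reflexivity.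
- cbn [cpow]. rewrite IH. unfold Cmul. cbn [fst snd].
  rewrite S_INR. replace ((INR n + 1) * t) with (t + INR n * t) by ring.
  rewrite cos_plus, sin_plus. f_equal; ring.
Qed.

Lemma root_angle_bound (n : nat) t : (0 < n)%nat -> 0 < t <= PI ->
  cos (INR n * t) = 1 -> sin (INR n * t) = 0 -> cos t <= cos (2 * PI / INR n).
Proof.
intros Hn [Ht0 HtPI] Hc Hs.
assert (HP := PI_RGT_0).
assert (HN : 0 < INR n) by (apply lt_0_INR; exact Hn).
destruct (sin_eq_0_0 _ Hs) as [k Hk].
assert (Hk0 : (0 < k)%Z).
{ apply lt_IZR. apply Rmult_lt_reg_r with PI; [lra|]. rewrite <- Hk. nra. }
assert (Hk1 : k <> 1%Z).
{ intros E. subst k. rewrite Hk, Rmult_1_l, cos_PI in Hc. lra. }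
assert (Hk2 : 2 <= IZR k) by (apply IZR_le; lia).
assert (Hangle : 2 * PI / INR n <= t).
{ apply (Rmult_le_reg_l (INR n)); [exact HN|]. field_simplify; [nra|lra]. }
assert (Hpos : 0 < 2 * PI / INR n) by (apply Rdiv_lt_0_compat; lra).
destruct (Req_dec t (2 * PI / INR n)) as [E|E].
- rewrite E. lra.
- left. apply cos_decreasing_1; lra.
Qed.

Lemma root_of_unity_re (n : nat) x y : (0 < n)%nat ->
  x ^ 2 + y ^ 2 = 1 -> cpow (x, y) n = (1, 0) -> (x, y) <> (1, 0) ->
  x <= cos (2 * PI / INR n).
Proof.
intros Hn Hcirc Hroot Hne.
assert (Hx : -1 <= x <= 1) by nra.
assert (Hpolar : forall t, cos t = x -> sin t = y -> -PI <= t <= PI ->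
  x <= cos (2 * PI / INR n)).
{ intros t Hct Hst Ht.
  rewrite <- Hct, <- Hst, cpow_polar in Hroot.
  injection Hroot as Hc Hs.
  destruct (Rtotal_order t 0) as [Hlt|[Heq|Hgt]].
  - rewrite <- Hct, <- cos_neg. apply root_angle_bound; [exact Hn|lra| |].
    + replace (INR n * - t) with (- (INR n * t)) by ring. rewrite cos_neg. exact Hc.
    + replace (INR n * - t) with (- (INR n * t)) by ring. rewrite sin_neg, Hs. ring.
  - exfalso. apply Hne. subst t. rewrite cos_0 in Hct. rewrite sin_0 in Hst.
    subst. reflexivity.
  - rewrite <- Hct. apply root_angle_bound; [exact Hn|lra|exact Hc|exact Hs]. }
assert (Hb := acos_bound x).
assert (Hc : cos (acos x) = x) by (apply cos_acos; exact Hx).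
assert (Hs : sin (acos x) = Rabs y).
{ rewrite sin_acos by exact Hx. rewrite <- sqrt_Rsqr_abs. f_equal. unfold Rsqr. nra. }
destruct (Rle_dec 0 y) as [Hy|Hy].
- apply (Hpolar (acos x)); [exact Hc| |lra]. rewrite Hs, Rabs_right by lra. reflexivity.
- apply (Hpolar (- acos x)); [rewrite cos_neg; exact Hc| |lra].
  rewrite sin_neg, Hs, Rabs_left by lra. ring.
Qed.

Lemma s_const_pos : 0 < s_const.
Proof.
unfold s_const. assert (HP := PI_RGT_0).
assert (0 < sin (PI / 9)) by (apply sin_gt_0; lra). lra.
Qed.

(* s = 2 sin (PI/9) is the distance from 1 to the nearest other 9th root of
   unity; hence every 9th root of unity xi <> 1 satisfies |1 - xi| >= s. *)
Lemma ninth_root_of_unity_dist x y :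
  x ^ 2 + y ^ 2 = 1 -> cpow (x, y) 9 = (1, 0) -> (x, y) <> (1, 0) ->
  s_const ^ 2 <= (1 - x) ^ 2 + y ^ 2.
Proof.
intros Hcirc Hroot Hne.
assert (Hre := root_of_unity_re 9 x y ltac:(lia) Hcirc Hroot Hne).
replace (INR 9) with 9 in Hre by (simpl; ring).
assert (Hs : s_const ^ 2 = 2 - 2 * cos (2 * PI / 9)).
{ unfold s_const. replace (2 * PI / 9) with (2 * (PI / 9)) by field.
  rewrite cos_2a_sin. ring. }
nra.
Qed.

Definition spread_convex (f : R -> R) : Prop :=
  forall p q u w, p <= u <= q -> p <= w <= q -> u + w = p + q ->
  f u + f w <= f p + f q.

Definition phi (x : R) : R := exp (-2 * x).

Lemma phi_inv_sq y : 1 / exp y ^ 2 = phi y.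
Proof.
unfold phi. replace (-2 * y) with (- (y + y)) by ring.
rewrite exp_Ropp, exp_plus. field. apply Rgt_not_eq, exp_pos.
Qed.

Lemma phi_le x y : x <= y -> phi y <= phi x.
Proof.
intros H. unfold phi. destruct (Req_dec x y) as [->|E]; [lra|].
left. apply exp_increasing. lra.
Qed.

(* phi is decreasing and turns sums into products: with A = phi p, B = phi q,
   the values X = phi u, W = phi w lie in [B, A] and X W = A B, whence
   (A - X) (A - W) >= 0 gives X + W <= A + B. *)
Lemma phi_spread_convex : spread_convex phi.
Proof.
intros p q u w Hu Hw Hs.
assert (Hprod : phi u * phi w = phi p * phi q).
{ unfold phi. rewrite <- !exp_plus. f_equal. lra. }
assert (HX := phi_le p u ltac:(lra)). assert (HW := phi_le p w ltac:(lra)).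
assert (HA : 0 < phi p) by apply exp_pos.
nra.
Qed.

Fixpoint lsum (xs : list R) : R :=
  match xs with nil => 0 | x :: xs' => x + lsum xs' end.

Lemma lsum_app xs ys : lsum (xs ++ ys) = lsum xs + lsum ys.
Proof. induction xs as [|x xs IH]; simpl; [ring|rewrite IH; ring]. Qed.

Lemma lsum_map_sub (g : R -> R) c xs :
  lsum (map (fun x => g x - c) xs) = lsum (map g xs) - INR (length xs) * c.
Proof.
induction xs as [|x xs IH]; cbn [map lsum length]; [simpl; ring|].
rewrite IH, S_INR. ring.
Qed.

Lemma lsum_le_bound U xs : Forall (fun x => x <= U) xs -> lsum xs <= INR (length xs) * U.
Proof.
induction 1 as [|x xs Hx Hxs IH]; cbn [lsum length]; [simpl; lra|].
rewrite S_INR. lra.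
Qed.

Lemma lsum_shift_nonneg l xs : Forall (fun x => l <= x) xs ->
  0 <= lsum (map (fun x => x - l) xs).
Proof. induction 1 as [|x xs Hx Hxs IH]; simpl; lra. Qed.

Lemma lsum_others_bound U x xs : Forall (fun y => y <= U) xs -> In x xs ->
  lsum xs - x <= (INR (length xs) - 1) * U.
Proof.
intros HU Hx. destruct (in_split x xs Hx) as [ys [zs ->]].
rewrite lsum_app. cbn [lsum].
rewrite length_app. cbn [length]. rewrite plus_INR, S_INR.
apply Forall_app in HU as [Hys Hzs]. apply Forall_inv_tail in Hzs.
assert (H1 := lsum_le_bound U ys Hys). assert (H2 := lsum_le_bound U zs Hzs).
lra.
Qed.

Lemma sum_f_R0_lsum (g : nat -> R) n : sum_f_R0 g n = lsum (map g (seq 0 (S n))).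
Proof.
induction n as [|n IH]; [simpl; ring|].
rewrite seq_S, map_app, lsum_app, <- IH. simpl. ring.
Qed.

(* Smoothing: among points of [l, b] with a prescribed total, the sum of a
   spread-convex function is largest when all points but one sit at an
   endpoint.  The total is written n (b - l) + (m - l) with l <= m <= b. *)
Lemma spread_sum f l b xs : spread_convex f -> l < b ->
  Forall (fun x => l <= x <= b) xs ->
  forall (n : nat) (m : R), l <= m <= b ->
  lsum (map (fun x => x - l) xs) = INR n * (b - l) + (m - l) ->
  lsum (map (fun x => f x - f l) xs) <= INR n * (f b - f l) + (f m - f l).
Proof.
intros Hf Hlb HF. induction HF as [|x xs Hx Hxs IH]; intros n m Hm Hsum; cbn [map lsum] in *.
- assert (Hn : 0 <= INR n) by apply pos_INR.
  assert (E1 : m = l) by nra.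
  assert (E2 : INR n = 0) by (subst m; nra).
  rewrite E1, E2. lra.
- assert (Hrest := lsum_shift_nonneg l xs
    ltac:(eapply Forall_impl; [|exact Hxs]; intros y Hy; lra)).
  destruct (Rle_dec x m) as [Hxm|Hxm].
  + (* move x down to l and the remainder m up to m - x + l *)
    assert (H1 := IH n (m - x + l) ltac:(lra) ltac:(lra)).
    assert (H2 := Hf l m x (m - x + l) ltac:(lra) ltac:(lra) ltac:(ring)).
    lra.
  + (* move x up to b, consuming one of the n full steps *)
    destruct n as [|n'].
    * simpl in Hsum. lra.
    * rewrite S_INR in *.
      assert (H1 := IH n' (m + b - x) ltac:(lra) ltac:(lra)).
      assert (H2 := Hf m b x (m + b - x) ltac:(lra) ltac:(lra) ltac:(ring)).
      lra.
Qed.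

(* Extremal case of the smoothing: N points of [l, b] summing to 0, with the
   window condition n (b - l) <= -N l <= (n + 1) (b - l); the extremal
   configuration puts N - n - 1 points at l, n points at b and one in between. *)
Lemma spread_bound f l b xs (n : nat) : spread_convex f -> l < b ->
  Forall (fun x => l <= x <= b) xs -> lsum xs = 0 ->
  INR n * (b - l) <= - INR (length xs) * l <= (INR n + 1) * (b - l) ->
  lsum (map f xs) <= (INR (length xs) - INR n - 1) * f l + INR n * f b
                     + f (- ((INR (length xs) - INR n - 1) * l + INR n * b)).
Proof.
intros Hf Hlb HF Hzero Hwin.
set (N := INR (length xs)) in *.
set (m := - ((N - INR n - 1) * l + INR n * b)).
assert (Hshift : lsum (map (fun x => x - l) xs) = INR n * (b - l) + (m - l)).
{ rewrite (lsum_map_sub (fun x => x)), map_id. fold N. unfold m. lra. }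
assert (H := spread_sum f l b xs Hf Hlb HF n m ltac:(unfold m; lra) Hshift).
rewrite lsum_map_sub in H. fold N in H. lra.
Qed.

Lemma least_integer_window c l b (v : Z) : 0 < c -> l < 0 -> l < b ->
  IZR v >= - c * l / (b - l) ->
  (forall j : Z, IZR j >= - c * l / (b - l) -> (v <= j)%Z) ->
  (1 <= v)%Z /\ (IZR v - 1) * (b - l) <= - c * l <= IZR v * (b - l).
Proof.
intros Hc Hl Hlb Hv Hmin.
assert (Hcl : 0 < - c * l) by (replace (- c * l) with (c * - l) by ring;
  apply Rmult_lt_0_compat; lra).
assert (Hpos : 0 < - c * l / (b - l)) by (apply Rdiv_lt_0_compat; lra).
assert (Hbelow : IZR (v - 1) < - c * l / (b - l)).
{ destruct (Rlt_dec (IZR (v - 1)) (- c * l / (b - l))) as [H|H]; [exact H|].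
  assert (Hle := Hmin (v - 1)%Z ltac:(lra)). lia. }
rewrite minus_IZR in Hbelow.
apply Rge_le in Hv.
split; [assert (0 < v)%Z by (apply lt_IZR; lra); lia|].
split.
- apply Rlt_le. apply (Rmult_lt_compat_r (b - l)) in Hbelow; [|lra].
  unfold Rdiv in Hbelow. rewrite Rmult_assoc, Rinv_l in Hbelow by lra. lra.
- apply (Rmult_le_compat_r (b - l)) in Hv; [|lra].
  unfold Rdiv in Hv. rewrite Rmult_assoc, Rinv_l in Hv by lra. lra.
Qed.

Lemma prod_f_R0_exp_ln (r : nat -> R) n : (forall k, (k <= n)%nat -> 0 < r k) ->
  prod_f_R0 r n = exp (sum_f_R0 (fun k => ln (r k)) n).
Proof.
intros Hr. induction n as [|n IH]; simpl.
- rewrite exp_ln; [reflexivity|apply Hr; lia].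
- rewrite IH by (intros k Hk; apply Hr; lia).
  rewrite exp_plus, exp_ln by (apply Hr; lia). reflexivity.
Qed.

Lemma prod_f_R0_Rpower (r : nat -> R) e n :
  prod_f_R0 (fun j => Rpower (r j) e) n = exp (e * sum_f_R0 (fun k => ln (r k)) n).
Proof.
unfold Rpower. induction n as [|n IH]; simpl; [reflexivity|].
rewrite IH, <- exp_plus. f_equal. ring.
Qed.

Lemma ln_le x y : 0 < x -> x <= y -> ln x <= ln y.
Proof. intros Hx [H|H]; [left; apply ln_increasing; lra|subst; lra]. Qed.

Lemma ln_div x y : 0 < x -> 0 < y -> ln (x / y) = ln x - ln y.
Proof.
intros Hx Hy. unfold Rdiv. rewrite ln_mult, ln_Rinv; [ring|lra|lra|].
apply Rinv_0_lt_compat; lra.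
Qed.

(* The normalized logarithmic distances x_k = ln R_k range over [xlow a, xhigh a]:
   the lower end comes from r_k > s and r_j <= 1 + a, the upper one from
   r_k <= 1 + a and prod r_j >= 9. *)
Definition xlow (a : R) : R := 7 / 8 * (ln s_const - ln (1 + a)).
Definition xhigh (a : R) : R := ln (1 + a) - ln 9 / 8.

Lemma Ustar_phi a v : 0 < a ->
  Ustar a v = (8 - IZR v) * phi (xlow a) + (IZR v - 1) * phi (xhigh a)
              + phi (- ((8 - IZR v) * xlow a + (IZR v - 1) * xhigh a)).
Proof.
intros Ha. assert (Hs := s_const_pos).
unfold Ustar, xlow, xhigh, phi, Rpower. cbv zeta.
rewrite !ln_div by (try apply exp_pos; lra).
rewrite ln_exp, <- exp_plus.
assert (Hsq : forall z, exp z ^ 2 = exp (2 * z)).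
{ intro z. simpl. rewrite Rmult_1_r, <- exp_plus. f_equal. ring. }
rewrite Hsq. f_equal; [f_equal; f_equal|]; f_equal; field.
Qed.

Lemma vstar_bound_eq a : 0 < a ->
  vstar_bound a = - 8 * xlow a / (xhigh a - xlow a).
Proof.
intros Ha. assert (Hs := s_const_pos).
unfold vstar_bound, xlow, xhigh, Rpower.
rewrite !ln_div by (try apply exp_pos; try lra; apply Rmult_lt_0_compat; apply exp_pos).
rewrite ln_mult by apply exp_pos.
rewrite !ln_exp. f_equal; field.
Qed.

(* Writing x_k = ln R_k = ln r_k - (1/8) sum_j ln r_j, the x_k lie in
   [xlow a, xhigh a], sum to 0, and sum 1 / R_k^2 = sum phi x_k; the bound is
   the smoothing estimate for the convex function phi. *)
Lemma normalized_sum_bound a (r : nat -> R) (v : Z) : 0 < a ->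
  (forall k, (k < 8)%nat -> s_const < r k <= 1 + a) ->
  9 <= prod_f_R0 r 7 ->
  IZR v >= vstar_bound a -> (forall j : Z, IZR j >= vstar_bound a -> (v <= j)%Z) ->
  sum_f_R0 (fun k => 1 / (r k * prod_f_R0 (fun j => Rpower (r j) (- (1 / 8))) 7) ^ 2) 7
  <= Ustar a v.
Proof.
intros Ha Hr Hprod Hv Hmin.
assert (Hs := s_const_pos).
assert (Hr0 : forall k, (k < 8)%nat -> 0 < r k) by (intros k Hk; specialize (Hr k Hk); lra).
set (ts := map (fun k => ln (r k)) (seq 0 8)).
set (T := lsum ts).
set (xs := map (fun t => t - T / 8) ts).
assert (HT : sum_f_R0 (fun k => ln (r k)) 7 = T) by apply sum_f_R0_lsum.
assert (Hts : forall t, In t ts -> ln s_const < t <= ln (1 + a)).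
{ intros t Ht. apply in_map_iff in Ht as [k [<- Hk]]. apply in_seq in Hk.
  specialize (Hr k ltac:(lia)).
  split; [apply ln_increasing|apply ln_le]; lra. }
assert (HT9 : ln 9 <= T).
{ rewrite prod_f_R0_exp_ln, HT in Hprod by (intros k Hk; apply Hr0; lia).
  rewrite <- (ln_exp T). apply ln_le; lra. }
assert (Hothers : forall t, In t ts -> T - t <= 7 * ln (1 + a)).
{ intros t Ht. replace 7 with (INR (length ts) - 1) by (simpl; ring).
  apply lsum_others_bound; [|exact Ht].
  apply Forall_forall. intros y Hy. apply Hts, Hy. }
assert (Hrange : Forall (fun x => xlow a <= x <= xhigh a) xs).
{ apply Forall_forall. intros x Hx. apply in_map_iff in Hx as [t [<- Ht]].
  specialize (Hts t Ht). specialize (Hothers t Ht).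
  unfold xlow, xhigh. split; lra. }
assert (Hzero : lsum xs = 0).
{ unfold xs. rewrite (lsum_map_sub (fun t => t)), map_id. fold T.
  unfold ts. rewrite length_map, length_seq. simpl. field. }
assert (Hsum : sum_f_R0 (fun k => 1 / (r k * prod_f_R0 (fun j => Rpower (r j) (- (1 / 8))) 7) ^ 2) 7
               = lsum (map phi xs)).
{ rewrite sum_f_R0_lsum. unfold xs, ts. rewrite !map_map. f_equal.
  apply map_ext_in. intros k Hk. apply in_seq in Hk.
  rewrite prod_f_R0_Rpower, HT, <- (exp_ln (r k)) at 1 by (apply Hr0; lia).
  rewrite <- exp_plus, phi_inv_sq. f_equal. field. }
set (l := xlow a) in *. set (b := xhigh a) in *.
assert (Hl : l < 0).
{ destruct (Hts (ln (r 0%nat))) as [H1 H2]; [left; reflexivity|]. unfold l, xlow. lra. }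
assert (Hb : 0 <= b).
{ assert (T <= 8 * ln (1 + a)); [|unfold b, xhigh; lra].
  assert (H := Hothers (ln (r 0%nat)) ltac:(left; reflexivity)).
  destruct (Hts (ln (r 0%nat))) as [H1 H2]; [left; reflexivity|]. lra. }
rewrite vstar_bound_eq in Hv, Hmin by exact Ha. fold l b in Hv, Hmin.
destruct (least_integer_window 8 l b v ltac:(lra) Hl ltac:(lra) Hv Hmin)
  as [Hv1 Hwin].
assert (Hn : INR (Z.to_nat (v - 1)) = IZR v - 1).
{ rewrite INR_IZR_INZ, Z2Nat.id by lia. rewrite minus_IZR. reflexivity. }
assert (Hlen : INR (length xs) = 8).
{ unfold xs, ts. rewrite !length_map, length_seq. simpl. ring. }
assert (H := spread_bound phi l b xs (Z.to_nat (v - 1)) phi_spread_convex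
  ltac:(lra) Hrange Hzero ltac:(rewrite Hlen, Hn; lra)).
rewrite Hsum, Ustar_phi by exact Ha. fold l b.
rewrite Hlen, Hn in H.
replace (8 - (IZR v - 1) - 1) with (8 - IZR v) in H by ring.
exact H.
Qed.

Lemma Cmod_nonneg u : 0 <= Cmod u.
Proof. apply sqrt_pos. Qed.

Lemma Cmod_mul u v : Cmod (Cmul u v) = Cmod u * Cmod v.
Proof.
destruct u as [a b], v as [c d]; unfold Cmod, Cmul; simpl.
rewrite <- sqrt_mult by nra. f_equal. ring.
Qed.

Lemma Cmod_RtoC x : Cmod (RtoC x) = Rabs x.
Proof. unfold Cmod, RtoC; simpl. rewrite <- sqrt_Rsqr_abs. f_equal. unfold Rsqr. ring. Qed.

Lemma dist_from_real_le a u : 0 <= a -> Cmod u <= 1 -> Cmod (Csub (RtoC a) u) <= 1 + a.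
Proof.
intros Ha Hu. destruct u as [x y]. unfold Cmod, Csub, RtoC in *; simpl in *.
assert (Hxy : x * (x * 1) + y * (y * 1) <= 1).
{ apply sqrt_le_0; [nra|lra|rewrite sqrt_1; exact Hu]. }
rewrite <- (sqrt_square (1 + a)) by lra. apply sqrt_le_1_alt. nra.
Qed.

Lemma prod_f_R0_shift (g : nat -> R) n :
  prod_f_R0 g (S n) = g 0%nat * prod_f_R0 (fun k => g (S k)) n.
Proof.
induction n as [|n IH]; [reflexivity|].
change (prod_f_R0 g (S (S n))) with (prod_f_R0 g (S n) * g (S (S n))).
rewrite IH. simpl. ring.
Qed.

Lemma Cmod_peval (ws : list Cx) x n : length ws = S n ->
  Cmod (peval ws x) = prod_f_R0 (fun k => Cmod (Csub x (nth k ws C0))) n.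
Proof.
revert ws. induction n as [|n IH]; intros ws Hlen.
- destruct ws as [|w [|w' ws]]; try discriminate. cbn [peval nth prod_f_R0].
  rewrite Cmod_mul. unfold Cmod at 2, Defs.C1; simpl.
  replace (1 * (1 * 1) + 0 * (0 * 1)) with 1 by ring. rewrite sqrt_1. ring.
- destruct ws as [|w ws]; [discriminate|]. injection Hlen as Hlen.
  cbn [peval]. rewrite Cmod_mul, prod_f_R0_shift, (IH ws Hlen). reflexivity.
Qed.

Lemma Cmod_peval_ge1 (ws : list Cx) x : (forall w, In w ws -> 1 <= Cmod (Csub x w)) ->
  1 <= Cmod (peval ws x).
Proof.
induction ws as [|w ws IH]; intros Hws; cbn [peval].
- unfold Cmod, Defs.C1; simpl. replace (1 * (1 * 1) + 0 * (0 * 1)) with 1 by ring.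
  rewrite sqrt_1. lra.
- rewrite Cmod_mul.
  assert (H1 := Hws w (or_introl eq_refl)).
  assert (H2 := IH (fun v Hv => Hws v (or_intror Hv))). nra.
Qed.

(* Differentiating p(z) = (z - x) q(z) at z = x gives p'(x) = q(x); comparing
   with p' = n prod_j (z - zeta_j) yields prod_k |x - z_k| = n prod_j |x - zeta_j|. *)
Lemma crit_product_identity x ws zs : is_crit (x :: ws) zs ->
  Cmod (peval ws x) = INR (S (length ws)) * Cmod (peval zs x).
Proof.
intros [_ Hcrit]. specialize (Hcrit x).
replace (pderiv (x :: ws) x) with (peval ws x) in Hcrit.
- rewrite Hcrit, Cmod_mul, Cmod_RtoC, Rabs_right by (apply Rle_ge, pos_INR).
  reflexivity.
- cbn [pderiv]. destruct (peval ws x), (pderiv ws x), x as [u v].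
  unfold Cadd, Cmul, Csub; simpl. f_equal; ring.
Qed.

From HB Require structures.
From mathcomp Require all_boot all_order all_algebra all_field.
From mathcomp Require Rstruct complex ring lra zify.

Module GraceHeawood.
Import HB.structures.
Import all_boot all_order all_algebra all_field.
Import Rstruct complex ring lra zify.
Import Order.TTheory GRing.Theory Num.Theory.
Local Open Scope ring_scope.
Set Implicit Arguments. Unset Strict Implicit. Unset Printing Implicit Defensive.

Notation C := (R[i]).

(* The polar derivative of g with respect to b, for g seen as of degree m:
   D_b g = m g - (X - b) g'.  It lowers the (formal) degree by one. *)
Definition polar (m : nat) (b : C) (g : {poly C}) : {poly C} :=
  m%:R *: g - ('X - b%:P) * g^`().

Fixpoint polar_iter (bs : seq C) (g : {poly C}) : {poly C} :=
  match bs with [::] => g | b :: bs' => polar_iter bs' (polar (size bs) b g) end.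

Lemma polarD m b g h : polar m b (g + h) = polar m b g + polar m b h.
Proof. rewrite /polar derivD scalerDr mulrDr; ring. Qed.

Lemma polarZ m b k g : polar m b (k *: g) = k *: polar m b g.
Proof. by rewrite /polar derivZ scalerBr scalerA mulrC -scalerA -scalerAr. Qed.

Lemma polar_iterD bs g h : polar_iter bs (g + h) = polar_iter bs g + polar_iter bs h.
Proof. by elim: bs g h => [|b bs IH] g h //=; rewrite polarD IH. Qed.

Lemma polar_iterZ bs k g : polar_iter bs (k *: g) = k *: polar_iter bs g.
Proof. by elim: bs g => [|b bs IH] g //=; rewrite polarZ IH. Qed.

Lemma size_polar m b (g : {poly C}) : (size g <= m.+1)%N -> (size (polar m b g) <= m)%N.
Proof.
move=> /leq_sizeP Hg; apply/leq_sizeP => j hj.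
rewrite /polar coefB coefZ mulrBl coefB coefXM coefCM !coef_deriv.
rewrite (Hg j.+1); last by lia.
rewrite mul0rn mulr0 subr0.
case: j hj => [|k] hj /=.
  by rewrite (_ : m = 0%N) ?mul0r ?subrr //; lia.
have [hm|hm] := boolP (m == k.+1).
  by rewrite (eqP hm) mulr_natl subrr.
by rewrite Hg ?mul0rn ?mulr0 ?subr0 //; lia.
Qed.

Lemma size_polar_iter bs (g : {poly C}) :
  (size g <= (size bs).+1)%N -> (size (polar_iter bs g) <= 1)%N.
Proof. elim: bs g => [|b bs IH] g //= hg; apply: IH; exact: size_polar. Qed.

Lemma polar_pow m b y :
  polar m.+1 b (('X - y%:P) ^+ m.+1) = ((m.+1)%:R * (b - y)) *: ('X - y%:P) ^+ m.
Proof.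
rewrite /polar deriv_exp derivXsubC mul1r /= exprS.
have -> : 'X - b%:P = ('X - y%:P) - (b - y)%:P by rewrite polyCB; ring.
rewrite -!mul_polyC polyCM polyC_natr; ring.
Qed.

Lemma polar_iter_pow bs y :
  polar_iter bs (('X - y%:P) ^+ size bs) = (((size bs)`!)%:R * \prod_(b <- bs) (b - y))%:P.
Proof.
elim: bs => [|b bs IH] /=; first by rewrite big_nil expr0 mulr1.
rewrite polar_pow polar_iterZ IH big_cons -mul_polyC -polyCM factS natrM.
congr (_%:P); ring.
Qed.

Notation Rec := (@complex.Re R).
Notation Imc := (@complex.Im R).
Definition nm2 (x : C) := Rec x ^+ 2 + Imc x ^+ 2.

Lemma ReM (x y : C) : Rec (x * y) = Rec x * Rec y - Imc x * Imc y.
Proof. by case: x => a b; case: y => c d. Qed.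
Lemma ImM (x y : C) : Imc (x * y) = Rec x * Imc y + Imc x * Rec y.
Proof. by case: x => a b; case: y => c d. Qed.
Lemma ReD (x y : C) : Rec (x + y) = Rec x + Rec y.
Proof. by case: x => a b; case: y => c d. Qed.
Lemma ImD (x y : C) : Imc (x + y) = Imc x + Imc y.
Proof. by case: x => a b; case: y => c d. Qed.
Lemma ReN (x : C) : Rec (- x) = - Rec x.
Proof. by case: x. Qed.
Lemma ImN (x : C) : Imc (- x) = - Imc x.
Proof. by case: x. Qed.
Lemma ReV (x : C) : Rec x^-1 = Rec x / nm2 x.
Proof. by case: x. Qed.
Lemma ImV (x : C) : Imc x^-1 = - Imc x / nm2 x.
Proof. by case: x => a b /=; rewrite /nm2 /= mulNr. Qed.
Lemma Ren (n : nat) : Rec (n%:R : C) = n%:R.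
Proof. by elim: n => [|n IH] //; rewrite -addn1 !natrD ReD IH. Qed.
Lemma Imn (n : nat) : Imc (n%:R : C) = 0.
Proof. by elim: n => [|n IH] //; rewrite -addn1 !natrD ImD IH addr0. Qed.
Lemma C_eq (x y : C) : Rec x = Rec y -> Imc x = Imc y -> x = y.
Proof. by case: x => a b; case: y => c d /= -> ->. Qed.

Lemma nm2_ge0 x : 0 <= nm2 x.
Proof. by rewrite /nm2 addr_ge0 ?sqr_ge0. Qed.

Lemma nm2_gt0 x : x != 0 -> 0 < nm2 x.
Proof.
move=> hx; rewrite lt_neqAle nm2_ge0 andbT eq_sym; apply: contra hx.
rewrite /nm2 paddr_eq0 ?sqr_ge0 // !sqrf_eq0 => /andP [/eqP h1 /eqP h2].
by apply/eqP; apply: C_eq; rewrite ?h1 ?h2.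
Qed.

Lemma nm2D x y : nm2 (x + y) = nm2 x + nm2 y + 2 * (Rec x * Rec y + Imc x * Imc y).
Proof. rewrite /nm2 ReD ImD; ring. Qed.

Lemma nm2M x y : nm2 (x * y) = nm2 x * nm2 y.
Proof. rewrite /nm2 ReM ImM; ring. Qed.

Lemma sum_nm2_ge0 (rs : seq C) (F : C -> C) : 0 <= \sum_(r <- rs) nm2 (F r).
Proof. by rewrite sumr_ge0 // => r _; apply: nm2_ge0. Qed.

Lemma logderiv (rs : seq C) z : z \notin rs ->
  (\prod_(r <- rs) ('X - r%:P))^`().[z] =
  (\prod_(r <- rs) ('X - r%:P)).[z] * \sum_(r <- rs) (z - r)^-1.
Proof.
elim: rs => [|r rs IH].
  by rewrite !big_nil -polyC1 derivC horner0 mulr0.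
rewrite in_cons negb_or => /andP [hzr hz].
rewrite !big_cons derivM derivXsubC mul1r hornerD !hornerM IH // !hornerXsubC.
have hz0 : z - r != 0 by rewrite subr_eq0.
by field.
Qed.

Lemma cauchy_schwarz (rs : seq C) (F : C -> C) :
  nm2 (\sum_(r <- rs) F r) <= (size rs)%:R * \sum_(r <- rs) nm2 (F r).
Proof.
elim: rs => [|r rs IH]; first by rewrite !big_nil /nm2 /= expr0n /= mul0r addr0.
rewrite !big_cons nm2D /=.
set S := \sum_(r <- rs) F r; set T := \sum_(r <- rs) nm2 (F r).
have hT : 0 <= T by apply: sum_nm2_ge0.
have hx := nm2_ge0 (F r).
move: IH; rewrite -/S -/T /nm2 -[(size rs).+1]addn1 natrD.
set n : R := (size rs)%:R.
have hn : 0 <= n by rewrite /n ler0n.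
set a := Rec (F r); set b := Imc (F r); set c := Rec S; set d := Imc S.
move=> IH.
have h1 : 0 <= (n * a - c) ^+ 2 + (n * b - d) ^+ 2 by rewrite addr_ge0 ?sqr_ge0.
have h2 : 2 * (a * c + b * d) <= n * (a ^+ 2 + b ^+ 2) + T.
  have [hn0|hn0] := eqVneq n 0.
    rewrite hn0 mul0r in IH; have hc : c = 0 by nra. have hd : d = 0 by nra.
    rewrite hc hd hn0; nra.
  have hnp : 0 < n by rewrite lt_neqAle eq_sym hn0 hn.
  nra.
nra.
Qed.

(* For fixed z, the real quadratic form
     q(u) = (1 - |z|^2) |u|^2 + 2 Re (z u) - 1
   evaluated at u = 1 / v satisfies q(1/v) |v|^2 = 1 - |z - v|^2; so the sign
   of q(1/(z - w)) tells whether w lies inside or outside the unit disk. *)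
Definition disk_form (z u : C) := (1 - nm2 z) * nm2 u + 2 * Rec (z * u) - 1.

Lemma disk_form_inv (z v : C) : v != 0 -> disk_form z v^-1 * nm2 v = 1 - nm2 (z - v).
Proof.
move=> hv; have hn0 : nm2 v != 0 by rewrite gt_eqF ?nm2_gt0.
move: hn0; rewrite /disk_form /nm2 ReM ReV ImV ReD ImD ReN ImN /nm2 => hn0.
by field.
Qed.

Lemma sum_disk_form (rs : seq C) (F : C -> C) (z : C) :
  \sum_(r <- rs) disk_form z (F r) =
  (1 - nm2 z) * \sum_(r <- rs) nm2 (F r) + 2 * Rec (z * \sum_(r <- rs) F r) - (size rs)%:R.
Proof.
elim: rs => [|r rs IH]; first by rewrite !big_nil !mulr0 /= subr0 addr0.
have -> : (size (r :: rs))%:R = (size rs)%:R + 1 :> R by rewrite /= -addn1 natrD.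
rewrite !big_cons IH /disk_form /nm2 !mulrDr ReD; ring.
Qed.

(* Indeed the disk form is >= 0 at 1/(z - b) and < 0 at each 1/(z - r),
   which contradicts Cauchy-Schwarz. *)
Lemma laguerre_sum (z b : C) (rs : seq C) (m : nat) :
  nm2 z <= 1 -> nm2 b <= 1 -> (size rs <= m)%N -> (0 < m)%N ->
  (forall r, r \in rs -> 1 < nm2 r) -> z != b -> z \notin rs ->
  \sum_(r <- rs) (z - r)^-1 != m%:R * (z - b)^-1.
Proof.
move=> hz hb hsz hm hrs hzb hzr; apply/eqP => hsum.
have hzb0 : z - b != 0 by rewrite subr_eq0.
set U := (z - b)^-1.
have hU : U != 0 by rewrite invr_eq0.
have hQb : 0 <= disk_form z U.
  have h := disk_form_inv z hzb0; rewrite (_ : z - (z - b) = b) in h; last by ring.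
  have : 0 <= disk_form z U * nm2 (z - b) by rewrite /U h subr_ge0.
  by rewrite pmulr_lge0 ?nm2_gt0.
have hQr : forall r, r \in rs -> disk_form z (z - r)^-1 < 0.
  move=> r hr; have hzr0 : z - r != 0.
    by rewrite subr_eq0; apply: contraNneq hzr => ->.
  have h := disk_form_inv z hzr0; rewrite (_ : z - (z - r) = r) in h; last by ring.
  have : disk_form z (z - r)^-1 * nm2 (z - r) < 0 by rewrite h subr_lt0 hrs.
  by rewrite pmulr_llt0 ?nm2_gt0.
have hn : (0 < size rs)%N.
  case: (posnP (size rs)) => // /size0nil hrs0.
  move: hsum; rewrite hrs0 big_nil => /esym/eqP.
  by rewrite mulf_eq0 pnatr_eq0 (negbTE hU) orbF => /eqP hm0; rewrite hm0 in hm.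
have hneg : \sum_(r <- rs) disk_form z (z - r)^-1 < 0.
  case: rs hn hQr {hsz hrs hzr hsum} => // r rs _ hQr.
  rewrite big_cons addrC ltr_nwDr ?hQr ?mem_head // big_seq sumr_le0 // => r' hr'.
  by rewrite ltW // hQr // in_cons hr' orbT.
set A := \sum_(r <- rs) nm2 ((z - r)^-1).
have hA : 0 <= A by apply: sum_nm2_ge0.
have hcs := cauchy_schwarz rs (fun r => (z - r)^-1).
rewrite hsum -/A nm2M /nm2 Ren Imn expr0n /= addr0 -/(nm2 U) in hcs.
rewrite sum_disk_form hsum -/A mulrCA [Rec (_%:R * _)]ReM Ren Imn mul0r subr0 in hneg.
move: hQb; rewrite /disk_form => hQb.
have hnm : (size rs)%:R <= m%:R :> R by rewrite ler_nat.
have hmp : 0 < m%:R :> R by rewrite ltr0n.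
have hal : 0 <= 1 - nm2 z by rewrite subr_ge0.
have hN := nm2_ge0 U.
have h1 : m%:R ^+ 2 * nm2 U <= m%:R * A.
  by apply: (le_trans hcs); rewrite ler_wpM2r.
have h2 : (1 - nm2 z) * (m%:R ^+ 2 * nm2 U) <= (1 - nm2 z) * (m%:R * A) by rewrite ler_wpM2l.
nra.
Qed.

Lemma polar_roots_outside m b (g : {poly C}) z :
  g != 0 -> (size g <= m.+1)%N -> (0 < m)%N ->
  (forall w, root g w -> 1 < nm2 w) -> nm2 b <= 1 -> root (polar m b g) z -> 1 < nm2 z.
Proof.
move=> hg hsz hm hroot hb hD.
rewrite ltNge; apply/negP => hz.
have [rs hgrs] := closed_field_poly_normal g.
set lc := lead_coef g in hgrs.
have hlc : lc != 0 by rewrite lead_coef_eq0.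
set P := \prod_(r <- rs) ('X - r%:P) in hgrs.
have hrs : forall r, r \in rs -> 1 < nm2 r.
  by move=> r hr; apply: hroot; rewrite hgrs rootZ // root_prod_XsubC.
have hzrs : z \notin rs by apply/negP => /hrs; rewrite ltNge hz.
have hsize : size g = (size rs).+1 by rewrite hgrs size_scale // size_prod_XsubC.
have hgz0 : g.[z] != 0.
  rewrite hgrs hornerZ mulf_neq0 //.
  by move: hzrs; rewrite -root_prod_XsubC /root.
have hdg : g^`().[z] = g.[z] * \sum_(r <- rs) (z - r)^-1.
  by rewrite hgrs derivZ !hornerZ logderiv // mulrA.
move: hD; rewrite /root /polar hornerD hornerN hornerZ hornerM hornerXsubC hdg.
set S := \sum_(r <- rs) (z - r)^-1 => /eqP hD.
have hS : (z - b) * S = m%:R.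
  apply: (mulfI hgz0); rewrite -[g.[z] * m%:R]mulrC.
  by move/eqP: hD; rewrite subr_eq0 => /eqP ->; ring.
have hzb : z != b.
  apply/negP => /eqP hzb; move: hS; rewrite hzb subrr mul0r => /esym/eqP.
  by rewrite pnatr_eq0 => /eqP hm0; rewrite hm0 in hm.
have hzb0 : z - b != 0 by rewrite subr_eq0.
have := laguerre_sum hz hb _ hm hrs hzb hzrs; rewrite -ltnS -hsize => /(_ hsz).
by rewrite -/S -hS mulrAC divff // mul1r eqxx.
Qed.

Lemma polar_iter_neq0 (bs : seq C) (g : {poly C}) :
  g != 0 -> (size g <= (size bs).+1)%N ->
  (forall w, root g w -> 1 < nm2 w) -> (forall b, b \in bs -> nm2 b <= 1) ->
  polar_iter bs g != 0.
Proof.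
elim: bs g => [|b bs IH] g //= hg hsz hroot hbs.
have hb : nm2 b <= 1 by apply: hbs; rewrite mem_head.
have hbr : ~~ root g b by apply/negP => /hroot; rewrite ltNge hb.
apply: IH.
- apply: contra hbr => /eqP h0.
  have : (polar (size bs).+1 b g).[b] = 0 by rewrite h0 horner0.
  rewrite /polar hornerD hornerN hornerZ hornerM hornerXsubC subrr mul0r subr0.
  by move/eqP; rewrite mulf_eq0 pnatr_eq0.
- exact: size_polar.
- by move=> w hw; apply: (polar_roots_outside hg hsz _ hroot hb hw).
- by move=> x hx; apply: hbs; rewrite in_cons hx orbT.
Qed.

Definition antideriv (g : {poly C}) : {poly C} :=
  \poly_(i < (size g).+1) (if i is j.+1 then g`_j / (j.+1)%:R else 0).

Lemma antiderivK g : (antideriv g)^`() = g.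
Proof.
apply/polyP => i; rewrite coef_deriv coef_poly.
case: ifP => h /=.
  by rewrite -[_ *+ _]mulr_natr divfK // pnatr_eq0.
by move/negbT: h; rewrite ltnS -leqNgt => h; rewrite mul0rn nth_default.
Qed.

Lemma antideriv_coef0 g : (antideriv g)`_0 = 0.
Proof. by rewrite coef_poly. Qed.

Lemma deriv_coef0_inj (P Q : {poly C}) : P^`() = Q^`() -> P`_0 = Q`_0 -> P = Q.
Proof.
move=> h h0; apply/polyP; case=> [|i]; first exact: h0.
have := congr1 (fun p : {poly C} => p`_i) h; rewrite !coef_deriv => /eqP.
by rewrite eqrMn2r /= => /eqP.
Qed.

Definition integral (c : C) (g : {poly C}) : C :=
  (antideriv g).[c] - (antideriv g).[0].

Lemma integral_deriv c g P : P^`() = g -> integral c g = P.[c] - P.[0].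
Proof.
move=> hP.
have E : P = antideriv g + (P`_0)%:P.
  apply: deriv_coef0_inj.
    by rewrite derivD derivC addr0 antiderivK.
  by rewrite coefD coefC antideriv_coef0 add0r.
by rewrite /integral [in RHS]E !hornerD !hornerC; ring.
Qed.

Lemma integralD c g h : integral c (g + h) = integral c g + integral c h.
Proof.
rewrite (integral_deriv c (P := antideriv g + antideriv h)); last by rewrite derivD !antiderivK.
rewrite /integral !hornerD; ring.
Qed.

Lemma integralZ c k g : integral c (k *: g) = k * integral c g.
Proof.
rewrite (integral_deriv c (P := k *: antideriv g)); last by rewrite derivZ antiderivK.
rewrite /integral !hornerZ; ring.
Qed.

(* A linear functional on polynomials of degree <= m that vanishes on all
   powers (X - y)^m vanishes identically: these powers span that space, as
   seen by expanding them binomially and reading coefficients. *)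
Lemma linear_functional_powers (m : nat) (Phi : {poly C} -> C) :
  (forall g h, Phi (g + h) = Phi g + Phi h) -> (forall k g, Phi (k *: g) = k * Phi g) ->
  (forall y, Phi (('X - y%:P) ^+ m) = 0) ->
  forall g : {poly C}, (size g <= m.+1)%N -> Phi g = 0.
Proof.
move=> hD hZ hy.
have Phi0 : Phi 0 = 0 by have := hZ 0 0; rewrite !scale0r mul0r.
have Phisum n (F : 'I_n -> {poly C}) : Phi (\sum_(i < n) F i) = \sum_(i < n) Phi (F i).
  exact: (big_morph Phi hD Phi0).
set E := \poly_(i < m.+1) (Phi 'X^(m - i) * ('C(m, i))%:R).
have hE y : E.[y] = 0.
  rewrite -(hy (- y)) polyCN opprK exprDn Phisum horner_poly.
  apply: eq_bigr => i _.
  rewrite -rmorphXn /= [_ * (y ^+ i)%:P]mulrC mul_polyC.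
  by rewrite -[(_ *: 'X^_) *+ _]scaler_nat scalerA hZ; ring.
have E0 : E = 0.
  apply: (roots_geq_poly_eq0 (rs := [seq (i%:R : C) | i <- iota 0 m.+1])).
  - by apply/allP => x /mapP [i _ ->]; rewrite /root hE.
  - by rewrite map_inj_uniq ?iota_uniq // => a b /eqP; rewrite eqr_nat => /eqP.
  - by rewrite size_map size_iota size_poly.
have hX i : (i <= m)%N -> Phi 'X^i = 0.
  move=> hi; have := congr1 (fun p : {poly C} => p`_(m - i)) E0.
  rewrite coef_poly coef0 (_ : (m - i < m.+1)%N = true); last by apply/idP; lia.
  rewrite subKn // => /eqP; rewrite mulf_eq0 pnatr_eq0 eqn0Ngt bin_gt0 leq_subr orbF.
  by move/eqP.
move=> g hg; rewrite -[g]coefK poly_def Phisum.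
by apply: big1 => i _; rewrite hZ hX ?mulr0 //; have := ltn_ord i; lia.
Qed.

(* Suppose the points bs (m of them) satisfy
     c prod_b (b - y) = ((c - y)^(m+1) - (-y)^(m+1)) / (m + 1)   for all y.
   Then for every f of degree <= m, the constant term of the iterated polar
   derivative of f w.r.t. bs is (m! / c) times the integral of f over [0, c].
   Both sides are linear in f and agree on the powers (X - y)^m. *)
Lemma apolarity (bs : seq C) (c : C) (f P : {poly C}) : c != 0 ->
  (forall y, c * \prod_(b <- bs) (b - y) =
             ((c - y) ^+ (size bs).+1 - (- y) ^+ (size bs).+1) / ((size bs).+1)%:R) ->
  (size f <= (size bs).+1)%N -> P^`() = f -> P.[c] = P.[0] ->
  (polar_iter bs f)`_0 = 0.
Proof.
move=> hc hQ hf hP hPc.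
set m := size bs in hQ hf.
pose Phi g := (polar_iter bs g)`_0 - ((m`!)%:R / c) * integral c g.
have hPhi : Phi f = 0.
  apply: (linear_functional_powers (m := m)) => //.
  - by move=> g h; rewrite /Phi polar_iterD coefD integralD; ring.
  - by move=> k g; rewrite /Phi polar_iterZ coefZ integralZ; ring.
  - move=> y; rewrite /Phi polar_iter_pow coefC /=.
    have hm1 : ((m.+1)%:R : C) != 0 by rewrite pnatr_eq0.
    rewrite (integral_deriv c (P := ((m.+1)%:R)^-1 *: ('X - y%:P) ^+ m.+1)); last first.
      rewrite derivZ deriv_exp derivXsubC mul1r /= -[(_ ^+ _) *+ _]scaler_nat.
      by rewrite scalerA mulVf ?scale1r.
    rewrite !hornerZ !horner_exp !hornerXsubC sub0r.
    rewrite -[(m.+1)%:R^-1 * _]mulrC -[(m.+1)%:R^-1 * _]mulrC -mulrBl -hQ.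
    by field.
by move: hPhi; rewrite /Phi (integral_deriv c hP) hPc subrr mulr0 subr0.
Qed.

(* The degree-8 polynomial Q_c with 9 c Q_c(y) = (c - y)^9 + y^9; its roots
   are c / (1 - xi) for the 9th roots of unity xi <> 1. *)
Definition Qcoef (j : nat) : C :=
  nth 0 [:: 1/9; -1; 4; -28/3; 14; -14; 28/3; -4; 1] j.
Definition Q (c : C) : {poly C} := \poly_(j < 9) (Qcoef j * c ^+ (8 - j)).

Lemma Q_eval c y : 9 * c * (Q c).[y] = (c - y) ^+ 9 + y ^+ 9.
Proof. by rewrite horner_poly !big_ord_recr big_ord0 /= /Qcoef /=; field. Qed.

Lemma Q_size c : size (Q c) = 9%N.
Proof. by rewrite size_poly_eq // /Qcoef /= subnn expr0 mulr1 oner_neq0. Qed.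

Lemma Q_monic c : lead_coef (Q c) = 1.
Proof. by rewrite lead_coef_poly // /Qcoef /= subnn expr0 mulr1 ?oner_neq0. Qed.

Definition toC (u : Cx) : C := Complex u.1 u.2.
Definition fromC (x : C) : Cx := (Rec x, Imc x).

Lemma toC_fromC x : toC (fromC x) = x. Proof. by case: x. Qed.
Lemma toC_mul u v : toC (Cmul u v) = toC u * toC v.
Proof. by case: u => a b; case: v => c d. Qed.
Lemma toC_add u v : toC (Cadd u v) = toC u + toC v.
Proof. by case: u => a b; case: v => c d. Qed.
Lemma toC_sub u v : toC (Csub u v) = toC u - toC v.
Proof. by case: u => a b; case: v => c d. Qed.
Lemma toC_cpow u n : toC (cpow u n) = toC u ^+ n.
Proof. by elim: n => [|n IH] //=; rewrite toC_mul IH exprS. Qed.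

Lemma nm2X x n : nm2 (x ^+ n) = nm2 x ^+ n.
Proof.
elim: n => [|n IH]; first by rewrite !expr0 /nm2 /= expr1n expr0n addr0.
by rewrite !exprS nm2M IH.
Qed.

Lemma ninth_root_dist (xi : C) : xi ^+ 9 = 1 -> xi != 1 -> s_const ^+ 2 <= nm2 (1 - xi).
Proof.
move=> h9 hne.
have hn : nm2 xi = 1.
  apply/eqP; rewrite -(pexpr_eq1 (n := 9)) ?nm2_ge0 // -nm2X h9.
  by rewrite /nm2 /= expr1n expr0n addr0.
case: xi h9 hne hn => x y h9 hne hn.
have hcirc : Rpow_def.pow x 2 + Rpow_def.pow y 2 = 1 by move: hn; rewrite /nm2 !RpowE.
have hroot : cpow (x, y) 9 = (1, 0)%R.
  have e : toC (cpow (x, y) 9) = 1 by rewrite toC_cpow; exact: h9.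
  by case: (cpow (x, y) 9) e => u w; rewrite /toC /= => -[-> ->].
have hne' : (x, y) <> (1, 0)%R by move=> [ex ey]; move: hne; rewrite ex ey eqxx.
move: (ninth_root_of_unity_dist x y hcirc hroot hne').
by rewrite !RpowE !RminusE /nm2 /= sub0r sqrrN => /RleP.
Qed.

Lemma Q_root_bound c b : c != 0 -> root (Q c) b -> s_const ^+ 2 * nm2 b <= nm2 c.
Proof.
move=> hc /eqP hr.
have h9 := Q_eval c b; rewrite hr mulr0 in h9.
have hb : b != 0.
  apply: contra hc => /eqP hb; move: h9; rewrite hb subr0 expr0n /= addr0 => /esym/eqP.
  by rewrite expf_eq0.
set xi := (b - c) / b.
have hxi9 : xi ^+ 9 = 1.
  rewrite /xi expr_div_n (_ : (b - c) ^+ 9 = b ^+ 9) ?divff ?expf_neq0 //.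
  have -> : (b - c) ^+ 9 = - (c - b) ^+ 9 by ring.
  by move/eqP: h9; rewrite eq_sym addr_eq0 => /eqP ->; rewrite opprK.
have hxi1 : xi != 1.
  rewrite /xi; apply: contra hc => /eqP /(congr1 (fun t => t * b)).
  by rewrite divfK // mul1r => /eqP; rewrite subr_eq addrC -subr_eq subrr eq_sym.
have := ninth_root_dist hxi9 hxi1.
rewrite (_ : 1 - xi = c / b); last by rewrite /xi; field.
have <- : nm2 (c / b) * nm2 b = nm2 c by rewrite -nm2M divfK.
by move=> h; rewrite ler_wpM2r // ltW ?nm2_gt0.
Qed.

Lemma prod_sub_sign (bs : seq C) y :
  \prod_(b <- bs) (b - y) = (-1) ^+ size bs * \prod_(b <- bs) (y - b).
Proof.
elim: bs => [|b bs IH]; first by rewrite !big_nil expr0 mulr1.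
by rewrite !big_cons IH /= exprS; ring.
Qed.

(* Proof: if not, the
   roots bs of Q_c lie in the closed unit disk; by apolarity the complete
   polar derivative of P' w.r.t. bs vanishes, contradicting Grace. *)
Lemma grace_heawood (P : {poly C}) (c : C) : (size P <= 10)%N ->
  'X * ('X - c%:P) %| P -> (forall z, root P^`() z -> 1 < nm2 z) ->
  s_const ^+ 2 < nm2 c.
Proof.
move=> hsP /dvdpP [q hq] hfar.
have hroot0 : ~~ root P^`() 0.
  by apply/negP => /hfar; rewrite /nm2 /= expr0n addr0 ltr10.
have [c0|hc] := eqVneq c 0.
  (* a double zero at 0 would make 0 a critical point *)
  move: hroot0; rewrite hq c0 polyC0 subr0 /root !derivM.
  by rewrite !(hornerD, hornerM, hornerX) !(mul0r, mulr0, addr0) eqxx.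
rewrite ltNge; apply/negP => hcs.
set F := P^`() in hroot0 hfar *.
have hF0 : F != 0 by apply: contraNneq hroot0 => ->; rewrite root0.
have hP0 : P != 0 by apply: contraNneq hF0 => hP; rewrite /F hP deriv0.
have hsF : (size F <= 9)%N by have := lt_size_deriv hP0; rewrite -/F; lia.
have [bs hbs] := closed_field_poly_normal (Q c).
rewrite Q_monic scale1r in hbs.
have hsb : size bs = 8%N by have := Q_size c; rewrite hbs size_prod_XsubC => -[].
have hs2 : 0 < s_const ^+ 2 by rewrite exprn_gt0 //; apply/RltP; exact: s_const_pos.
have hbin b : b \in bs -> nm2 b <= 1.
  move=> hb; have h : s_const ^+ 2 * nm2 b <= nm2 c.
    by apply: Q_root_bound hc _; rewrite hbs root_prod_XsubC.
  by rewrite -(ler_pM2l hs2) mulr1 (le_trans h).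
have hQ y : c * \prod_(b <- bs) (b - y) =
    ((c - y) ^+ (size bs).+1 - (- y) ^+ (size bs).+1) / ((size bs).+1)%:R.
  have -> : \prod_(b <- bs) (b - y) = (Q c).[y].
    rewrite prod_sub_sign hsb hbs horner_prod (_ : (-1) ^+ 8 = 1 :> C) ?mul1r; last by ring.
    by apply: eq_bigr => b _; rewrite hornerXsubC.
  have E := Q_eval c y; rewrite hsb.
  by rewrite (_ : (c - y) ^+ 9 = 9 * c * (Q c).[y] - y ^+ 9); [field | rewrite E; ring].
have hP0c : P.[c] = P.[0].
  by rewrite hq !hornerM !hornerXsubC !hornerX subrr !(mulr0, mul0r).
have hsFb : (size F <= (size bs).+1)%N by rewrite hsb.
have hconst := apolarity hc hQ hsFb (erefl F) hP0c.
have hnz := polar_iter_neq0 hF0 hsFb hfar hbin.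
have /size1_polyC hL := size_polar_iter hsFb.
by move: hnz; rewrite hL hconst eqxx.
Qed.

Lemma In_mem (T : eqType) (x : T) (s : seq T) : List.In x s <-> x \in s.
Proof.
elim: s => [|y s IH]; first by rewrite in_nil.
rewrite /= in_cons; split.
- by case=> [->|/IH ->]; rewrite ?eqxx ?orbT.
- by case/orP=> [/eqP ->|/IH]; [left|right].
Qed.

Lemma size_length (T : Type) (s : seq T) : size s = length s.
Proof. by elim: s => //= x s ->. Qed.

Lemma Cnat n : Complex (n%:R) 0 = (n%:R : C).
Proof. by apply: C_eq; rewrite /= ?Ren ?Imn. Qed.

Lemma nm2N x : nm2 (- x) = nm2 x.
Proof. by rewrite /nm2 ReN ImN !sqrrN. Qed.

Lemma nm2_toC u : nm2 (toC u) = Rpow_def.pow (Cmod u) 2.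
Proof.
rewrite /Cmod pow2_sqrt; last by apply: Rplus_le_le_0_compat; apply: pow2_ge_0.
by rewrite /nm2 !RpowE.
Qed.

Lemma peval_shift (ws : list Cx) (sh : C) x :
  (\prod_(w <- ws) ('X - (toC w - sh)%:P)).[x] = toC (peval ws (fromC (x + sh))).
Proof.
elim: ws => [|w ws IH]; first by rewrite big_nil hornerC.
rewrite big_cons hornerM hornerXsubC IH /= toC_mul toC_sub toC_fromC.
by congr (_ * _); ring.
Qed.

Lemma pderiv_shift (ws : list Cx) (sh : C) x :
  (\prod_(w <- ws) ('X - (toC w - sh)%:P))^`().[x] = toC (pderiv ws (fromC (x + sh))).
Proof.
elim: ws => [|w ws IH]; first by rewrite big_nil derivC horner0.
rewrite big_cons derivM derivXsubC mul1r hornerD hornerM hornerXsubC IH peval_shift /=.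
by rewrite toC_add toC_mul toC_sub toC_fromC; congr (_ + _ * _); ring.
Qed.

(* This is Grace-Heawood for P(x) = p(x + a), with P(0) = 0. *)
Lemma zeros_far_from_a (a : R) (zk zeta : list Cx) (z : Cx) :
  length zk = 8%N -> is_crit (RtoC a :: zk) zeta ->
  (forall w, List.In w zeta -> Rlt 1 (Rpow_def.pow (Cmod (Csub (RtoC a) w)) 2)) ->
  List.In z zk -> Rlt (Rpow_def.pow s_const 2) (Rpow_def.pow (Cmod (Csub (RtoC a) z)) 2).
Proof.
move=> hlen [_ hcrit] hzeta /In_mem hz.
set sh := toC (RtoC a).
set f := fun w : Cx => toC w - sh.
have nm2_f w : nm2 (f w) = Rpow_def.pow (Cmod (Csub (RtoC a) w)) 2.
  by rewrite -nm2_toC toC_sub -nm2N opprB.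
have prod_map r : \prod_(w <- r) ('X - (f w)%:P) = \prod_(x <- map f r) ('X - x%:P).
  by rewrite big_map.
apply/RltP; rewrite -nm2_f RpowE.
apply: (@grace_heawood (\prod_(w <- RtoC a :: zk) ('X - (f w)%:P))).
- by rewrite prod_map size_prod_XsubC size_map /= size_length hlen.
- rewrite big_cons [f (RtoC a)]/f subrr subr0 dvdp_mul2l ?polyX_eq0 //.
  by rewrite prod_map dvdp_XsubCl root_prod_XsubC map_f.
- move=> x; rewrite /root pderiv_shift hcrit toC_mul -peval_shift mulf_eq0.
  case/orP=> [|]; first by rewrite [length _]/= hlen INRE /toC /= Cnat pnatr_eq0.
  rewrite prod_map -/(root _ x) root_prod_XsubC => /mapP [w /In_mem hw ->].
  by rewrite nm2_f; apply/RltP; apply: hzeta.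
Qed.

End GraceHeawood.

Theorem lemma3p13 (a : R) (zk zeta : list Cx) (v : Z) :
  0 < a < 1 ->
  length zk = 8%nat ->
  Forall (fun w => Cmod w <= 1) zk ->
  extremal 9 (RtoC a :: zk) ->
  is_crit (RtoC a :: zk) zeta ->
  Iw (RtoC a) zeta = Ip (RtoC a :: zk) zeta ->
  (forall j : nat, (j < 8)%nat -> Cmod (Csub (RtoC a) (nth j zeta C0)) > 1) ->
  IZR v >= vstar_bound a ->
  (forall j : Z, IZR j >= vstar_bound a -> (v <= j)%Z) ->
  let r := fun k : nat => Cmod (Csub (RtoC a) (nth k zk C0)) in
  let Rk := fun k : nat => r k * prod_f_R0 (fun j => Rpower (r j) (- (1 / 8))) 7 in
  sum_f_R0 (fun k => 1 / (Rk k ^ 2)) 7 <= Ustar a v.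
Proof.
intros Ha Hlen Hdisk _ Hcrit _ Hrho Hv Hmin r Rk.
assert (Hlz : length zeta = 8%nat) by (destruct Hcrit as [H _]; simpl in H; lia).
assert (Hzeta : forall w, In w zeta -> 1 < Cmod (Csub (RtoC a) w)).
{ intros w Hw. destruct (In_nth zeta w C0 Hw) as [j [Hj <-]]. apply Hrho. lia. }
assert (Hprod : 9 <= prod_f_R0 r 7).
{ unfold r. rewrite <- Cmod_peval by exact Hlen.
  rewrite (crit_product_identity _ _ _ Hcrit), Hlen.
  assert (H := Cmod_peval_ge1 zeta (RtoC a) ltac:(intros w Hw; left; apply Hzeta, Hw)).
  replace (INR 9) with 9 by (simpl; ring). lra. }
assert (Hrange : forall k, (k < 8)%nat -> s_const < r k <= 1 + a).
{ intros k Hk. assert (Hin : In (nth k zk C0) zk) by (apply nth_In; lia).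
  split.
  - assert (Hfar := GraceHeawood.zeros_far_from_a Hlen Hcrit
      ltac:(intros w Hw; specialize (Hzeta w Hw); simpl; nra) Hin).
    assert (Hs := s_const_pos). assert (Hr := Cmod_nonneg (Csub (RtoC a) (nth k zk C0))).
    simpl in Hfar. fold (r k) in Hfar, Hr. nra.
  - apply dist_from_real_le; [lra|]. rewrite Forall_forall in Hdisk. apply Hdisk, Hin. }
apply normalized_sum_bound; tauto.
Qed.
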